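(* Let $\alpha\in(0,1)$, let $X_1,X_2,\dots$ be i.i.d. real random variables with distribution function $F$, and assume $F$ has a unique $\alpha$-quantile $q_\alpha=F^{-1}(\alpha)$. Let $F_k$ be the empirical distribution function of $X_1,\dots,X_k$ and $F_k^{-1}(\alpha):=\inf\{t:F_k(t)\ge\alpha\}$. Put $d(x):=\min\{F(q_\alpha+x)-\alpha,\ \alpha-F(q_\alpha-x)\}$. Then $d(x)>0$ for all $x>0$ and for every $n\in\mathbb N$, $$\mathbb P\Big(\sup_{k\ge n}|F_k^{-1}(\alpha)-q_\alpha|>x\Big)\le 2e^{-2n\,d(x)^2}\qquad\forall x>0.$$
   Context: The $\alpha$-quantiles of $F$ are the points $q$ with $F(q-)\le\alpha\le F(q)$, where $F(q-)$ denotes the left limit of $F$ at $q$. *)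

From HB Require Import structures.
From mathcomp Require Import all_boot all_order all_algebra.
From mathcomp Require Import all_classical all_reals all_analysis.
Set Implicit Arguments. Unset Strict Implicit. Unset Printing Implicit Defensive.
Import Order.TTheory GRing.Theory Num.Theory.
Import numFieldNormedType.Exports.
Local Open Scope classical_set_scope.
Local Open Scope ring_scope.

Section defs.
Context {d : measure_display} {T : measurableType d} {R : realType}
  (P : probability T R).

(* Mutual independence of a sequence of real random variables: for every n
   and Borel sets B_0,...,B_{n-1}, P(/\_i {X_i in B_i}) = prod_i P(X_i in B_i).
   (Taking B_i = setT recovers every finite subfamily.) *)
Definition mutually_independent (X : nat -> {RV P >-> R}) : Prop :=
  forall (n : nat) (B : nat -> set R), (forall i, measurable (B i)) ->
    P (\big[setI/setT]_(i < n) (X i @^-1` B i)) =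
    (\prod_(i < n) P (X i @^-1` B i))%E.

Definition identically_distributed (X : nat -> {RV P >-> R}) : Prop :=
  forall (i : nat) (A : set R), measurable A ->
    distribution P (X i) A = distribution P (X 0) A.

Definition iid (X : nat -> {RV P >-> R}) : Prop :=
  mutually_independent X /\ identically_distributed X.

Definition distfun (Y : {RV P >-> R}) (t : R) : R := fine (cdf Y t).

Definition left_lim (F : R -> R) (q : R) : R := lim (F x @[x --> q^'-]).

Definition is_quantile (F : R -> R) (alpha q : R) : Prop :=
  left_lim F q <= alpha <= F q.

(* empirical distribution function of X_1,...,X_k (indices 0..k-1) *)
Definition empirical_df (X : nat -> {RV P >-> R}) (k : nat) (w : T) (t : R) : R :=
  (\sum_(i < k) (((X i w <= t)%R)%:R : R)) / k%:R.

Definition empirical_quantile (X : nat -> {RV P >-> R}) (k : nat) (alpha : R)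
  (w : T) : R :=
  inf [set t | alpha <= empirical_df X k w t].

End defs.

From HB Require Import structures.
From mathcomp Require Import all_boot all_order all_algebra.
From mathcomp Require Import all_classical all_reals all_analysis.
From mathcomp Require Import ring lra.
Import Order.TTheory GRing.Theory Num.Theory.
Import numFieldNormedType.Exports.
Local Open Scope classical_set_scope.
Local Open Scope ring_scope.

(* Uniqueness of the quantile forces F(qa + x) > alpha > F(qa - x) for x > 0, so
   d(x) > 0.  If |F_k^{-1}(alpha) - qa| > x then F_k(qa + x) < alpha or
   F_k(qa - x) >= alpha, hence the number S_k(c) of samples <= c deviates from its
   mean k F(c) by at least k d(x), at c = qa + x or at c = qa - x.  For each c the
   probability that this happens for some k >= n is at most exp(-2 n d(x)^2): by
   Hoeffding's lemma, exp(lam (k F(c) - S_k(c)) - k lam^2 / 8) is a nonnegative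
   supermartingale, and Ville's maximal inequality with lam = +-4 d(x) bounds the
   probability that it ever exceeds exp(2 n d(x)^2).  Ville's inequality is proved on
   the indicator sequence (X_i <= c)_{i < N}, whose law is a product of Bernoulli
   weights by independence, and then N tends to infinity. *)

Set Implicit Arguments. Unset Strict Implicit.

Lemma is_derive_le0_nincr (R : realType) (f df : R -> R) (a b : R) :
  (forall x, is_derive x (1 : R) f (df x)) -> (forall x, a <= x <= b -> df x <= 0) ->
  a <= b -> f b <= f a.
Proof.
move=> fd dle ab.
have cf : continuous f.
  by move=> x; apply/differentiable_continuous/derivable1_diffP; have [] := fd x.
have ina : a \in `[a, b] by rewrite in_itv /= lexx.
have inb : b \in `[a, b] by rewrite in_itv /= lexx andbT.
apply: (ler0_derive1_le_cc _ _ (continuous_subspaceT cf) inb ina ab) => // x.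
rewrite in_itv /= => /andP[ax xb].
by rewrite derive1E derive_val dle // !ltW.
Qed.

Lemma is_derive_ge0_ndecr (R : realType) (f df : R -> R) (a b : R) :
  (forall x, is_derive x (1 : R) f (df x)) -> (forall x, a <= x <= b -> 0 <= df x) ->
  a <= b -> f a <= f b.
Proof.
move=> fd dge ab; rewrite -lerN2.
apply: (@is_derive_le0_nincr _ (fun x => - f x) (fun x => - df x)) => // x /dge.
by rewrite oppr_le0.
Qed.

Section HoeffdingLemma.
Variables (R : realType) (p : R).
Hypothesis p01 : 0 <= p <= 1.

(* [hoeffding_fun t = exp (- t^2 / 8) * E[exp (t (p - B))]] for [B] a Bernoulli(p)
   variable, and [hoeffding_slope] is its logarithmic derivative. *)
Definition hoeffding_den (t : R) := p + (1 - p) * expR t.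

Definition hoeffding_slope (t : R) := p - p / hoeffding_den t - 4^-1 * t.

Definition hoeffding_fun (t : R) :=
  expR ((p - 1) * t - 8^-1 * (t * t)) * hoeffding_den t.

Lemma hoeffding_den_gt0 t : 0 < hoeffding_den t.
Proof.
have [p0 p1] := andP p01; have e0 := expR_gt0 t.
rewrite /hoeffding_den; have [->|pn0] := eqVneq p 0.
  by rewrite subr0 mul1r add0r.
apply: ltr_pwDl; first by rewrite lt_def pn0.
by rewrite mulr_ge0 ?subr_ge0 // ltW.
Qed.

Lemma is_derive_hoeffding_den t :
  is_derive t (1 : R) hoeffding_den ((1 - p) * expR t).
Proof. by apply: trigger_derive; rewrite add0r mul1r. Qed.

Lemma is_derive_hoeffding_slope t :
  is_derive t (1 : R) hoeffding_slope (p * (1 - p) * expR t / hoeffding_den t ^+ 2 - 1/4).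
Proof.
have D0 : hoeffding_den t != 0 by rewrite gt_eqF ?hoeffding_den_gt0.
have := is_deriveB (is_deriveB (is_derive_cst p t 1)
  (is_deriveZ p (is_deriveV D0 (is_derive_hoeffding_den t))))
  (is_deriveZ (4^-1) (is_derive_id t 1)).
set f := (X in is_derive _ _ X _ -> _).
have -> : hoeffding_slope = f by apply/funext => y; rewrite /f /hoeffding_slope.
by move/is_derive_eq; apply; rewrite /GRing.scale /=; field.
Qed.

Lemma is_derive_hoeffding_fun t : is_derive t (1 : R) hoeffding_fun
  (expR ((p - 1) * t - 8^-1 * (t * t)) * (hoeffding_den t * hoeffding_slope t)).
Proof.
have de : is_derive t (1 : R) (fun s => (p - 1) * s - 8^-1 * (s * s)) (p - 1 - 4^-1 * t).
  by apply: trigger_derive; rewrite /GRing.scale /=; field.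
have := is_deriveM (is_derive1_comp (is_derive_expR _) de) (is_derive_hoeffding_den t).
set f := (X in is_derive _ _ X _ -> _).
have -> : hoeffding_fun = f by apply/funext => y; rewrite /f /hoeffding_fun.
move/is_derive_eq; apply; rewrite /GRing.scale /= /hoeffding_slope.
have D0 : hoeffding_den t != 0 by rewrite gt_eqF ?hoeffding_den_gt0.
by move: D0; rewrite /hoeffding_den => D0; field.
Qed.

Lemma hoeffding_slope_sign t :
  (0 <= t -> hoeffding_slope t <= 0) /\ (t <= 0 -> 0 <= hoeffding_slope t).
Proof.
have slope0 : hoeffding_slope 0 = 0.
  by rewrite /hoeffding_slope /hoeffding_den expR0 mulr1 subrKC divr1 mulr0 !subrr.
(* AM-GM: 4 p (1 - p) e^s <= (p + (1 - p) e^s)^2. *)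
have dle s : p * (1 - p) * expR s / hoeffding_den s ^+ 2 - 1/4 <= 0.
  rewrite subr_le0 ler_pdivrMr ?exprn_gt0 ?hoeffding_den_gt0 // /hoeffding_den.
  have := sqr_ge0 (p - (1 - p) * expR s); nra.
by split => ht; rewrite -slope0;
  exact: is_derive_le0_nincr is_derive_hoeffding_slope (fun s _ => dle s) ht.
Qed.

Lemma hoeffding_fun_le1 t : hoeffding_fun t <= 1.
Proof.
have fun0 : hoeffding_fun 0 = 1.
  by rewrite /hoeffding_fun /hoeffding_den !mulr0 subr0 expR0 mulr1 subrKC mul1r.
rewrite -fun0; have [t0|t0] := leP 0 t.
- apply: (is_derive_le0_nincr is_derive_hoeffding_fun) t0 => s /andP[s0 _].
  rewrite pmulr_rle0 ?expR_gt0 // pmulr_rle0 ?hoeffding_den_gt0 //.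
  by have [+ _] := hoeffding_slope_sign s; apply.
- apply: (is_derive_ge0_ndecr is_derive_hoeffding_fun) (ltW t0) => s /andP[_ s0].
  rewrite pmulr_rge0 ?expR_gt0 // pmulr_rge0 ?hoeffding_den_gt0 //.
  by have [_ +] := hoeffding_slope_sign s; apply.
Qed.

Lemma hoeffding_lemma_bernoulli l :
  p * expR (l * (p - 1)) + (1 - p) * expR (l * p) <= expR (8^-1 * (l * l)).
Proof.
have := hoeffding_fun_le1 l; rewrite /hoeffding_fun /hoeffding_den => H.
rewrite (_ : l * p = l * (p - 1) + l); last by ring.
rewrite (_ : l * (p - 1) = (p - 1) * l - 8^-1 * (l * l) + 8^-1 * (l * l)); last by ring.
set a := (p - 1) * l - 8^-1 * (l * l); set b := 8^-1 * (l * l).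
rewrite (expRD (a + b)) !(expRD a b).
rewrite (_ : _ + _ = expR a * (p + (1 - p) * expR l) * expR b); last by ring.
by rewrite -[X in _ <= X]mul1r ler_pM2r ?expR_gt0.
Qed.

End HoeffdingLemma.

Section BernoulliPaths.
Variable R : realType.

Fixpoint bitseqs (n : nat) : seq (seq bool) :=
  if n is n'.+1 then [seq true :: b | b <- bitseqs n'] ++ [seq false :: b | b <- bitseqs n']
  else [:: [::]].

Definition bern_weight (p : R) (b : seq bool) : R :=
  \prod_(x <- b) (if x then p else 1 - p).

Fixpoint reaches (phi : bool -> R) (L s : R) (b : seq bool) : bool :=
  if b is x :: b' then (L <= s) || reaches phi L (s + phi x) b' else L <= s.

Lemma big_bitseqsS n (f : seq bool -> R) :
  \sum_(b <- bitseqs n.+1) f b =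
  \sum_(b <- bitseqs n) f (true :: b) + \sum_(b <- bitseqs n) f (false :: b).
Proof. by rewrite /= big_cat !big_map. Qed.

Lemma size_bitseqs n b : b \in bitseqs n -> size b = n.
Proof.
elim: n b => [|n IH] b /=; first by rewrite inE => /eqP ->.
by rewrite mem_cat => /orP[] /mapP[b' /IH <- ->].
Qed.

Lemma mem_bitseqs b : b \in bitseqs (size b).
Proof.
elim: b => [|x b IH] /=; first by rewrite inE.
by rewrite mem_cat; case: x; [rewrite map_f | rewrite orbC map_f].
Qed.

Lemma uniq_bitseqs n : uniq (bitseqs n).
Proof.
elim: n => //= n IH; rewrite cat_uniq !map_inj_uniq; try by move=> ? ? [].
rewrite IH /= andbT; apply/hasPn => _ /mapP[b _ ->].
by apply/mapP => -[b' _].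
Qed.

Lemma sum_bern_weight p n : \sum_(b <- bitseqs n) bern_weight p b = 1.
Proof.
elim: n => [|n IH]; first by rewrite /= big_seq1 /bern_weight big_nil.
rewrite big_bitseqsS /bern_weight.
under eq_bigr do rewrite big_cons.
under [X in _ + X]eq_bigr do rewrite big_cons.
by rewrite -!mulr_sumr -!/(bern_weight _ _) IH !mulr1 subrKC.
Qed.

Lemma reaches_sum phi L s b : L <= s + \sum_(x <- b) phi x -> reaches phi L s b.
Proof.
elim: b s => [|x b IH] s /=; first by rewrite big_nil addr0.
by rewrite big_cons addrA => /IH ->; rewrite orbT.
Qed.

Lemma reaches_cat phi L s b b' : reaches phi L s b -> reaches phi L s (b ++ b').
Proof.
elim: b s => [|x b IH] s /=; first by case: b' => //= y b' ->.
by move=> /orP[->//|/IH ->]; rewrite orbT.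
Qed.

(* Ville's maximal inequality on a finite horizon: under the product weights,
   [exp] of the running sum is a supermartingale. *)
Lemma ville_bitseqs p phi L :
  0 <= p <= 1 -> p * expR (phi true) + (1 - p) * expR (phi false) <= 1 ->
  forall n s,
  \sum_(b <- bitseqs n) bern_weight p b * (reaches phi L s b)%:R <= expR (s - L).
Proof.
move=> /andP[p0 p1] super; elim => [|n IH] s.
  rewrite /= big_seq1 /bern_weight big_nil mul1r /=.
  have [Ls|] := leP L s; last by rewrite expR_ge0.
  by rewrite (le_trans _ (expR_ge1Dx _)) // lerDl subr_ge0.
rewrite big_bitseqsS /=.
have [Ls|Ls] := leP L s.
  under eq_bigr do rewrite mulr1.
  under [X in _ + X]eq_bigr do rewrite mulr1.
  rewrite -big_bitseqsS sum_bern_weight.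
  by rewrite (le_trans _ (expR_ge1Dx _)) // lerDl subr_ge0.
under eq_bigr do rewrite /bern_weight big_cons /= -mulrA.
under [X in _ + X]eq_bigr do rewrite /bern_weight big_cons /= -mulrA.
rewrite -!mulr_sumr.
apply: (le_trans (lerD (ler_wpM2l p0 (IH _)) (ler_wpM2l _ (IH _)))).
  by rewrite subr_ge0.
rewrite !(addrC s) -!addrA !expRD !mulrA -mulrDl.
rewrite mulrC ler_pM2l ?expR_gt0 // -mulrDl.
by rewrite -[X in _ <= X]mul1r ler_pM2r ?expR_gt0.
Qed.

End BernoulliPaths.

Lemma nondecreasing_bigcup_measure_le d (T : measurableType d) (R : realType)
    (mu : {measure set T -> \bar R}) (F : nat -> set T) b :
  (forall N, measurable (F N)) -> (forall N, F N `<=` F N.+1) ->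
  (forall N, (mu (F N) <= b)%E) -> (mu (\bigcup_N F N) <= b)%E.
Proof.
move=> mF FS Fb.
have nd : nondecreasing_seq F.
  by apply/nondecreasing_seqP => N; apply/subsetPset; exact: FS.
have F_mu := nondecreasing_cvg_mu (mu := mu) mF (bigcupT_measurable _ mF) nd.
rewrite -(cvg_lim _ F_mu) //; apply: lime_le; first by apply/cvg_ex; eexists; exact: F_mu.
exact: nearW.
Qed.

Section DistributionFunction.
Context {d : measure_display} {T : measurableType d} {R : realType}
  (P : probability T R).

Lemma distfun01 (Y : {RV P >-> R}) c : 0 <= distfun Y c <= 1.
Proof.
apply/andP; split; first exact/fine_ge0/cdf_ge0.
rewrite -lee_fin fineK ?cdf_le1 // ge0_fin_numE ?cdf_ge0 //.
exact: le_lt_trans (cdf_le1 _ _) (ltry 1).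
Qed.

Lemma distfun_nondecreasing (Y : {RV P >-> R}) : {homo distfun Y : x y / x <= y}.
Proof.
move=> a b ab; rewrite /distfun.
have fin r : cdf Y r \is a fin_num.
  by rewrite ge0_fin_numE ?cdf_ge0 // (le_lt_trans (cdf_le1 _ _)) // ltry.
by apply: fine_le; rewrite ?fin //; exact: cdf_nondecreasing.
Qed.

End DistributionFunction.

Section Sample.
Context {d : measure_display} {T : measurableType d} {R : realType}
  (P : probability T R) (X : nat -> {RV P >-> R}).

Definition indicators (c : R) (N : nat) (w : T) : seq bool :=
  [seq X i w <= c | i <- iota 0 N].

Definition halfline (c : R) (b : bool) : set R :=
  if b then [set` `]-oo, c]] else [set` `]c, +oo[].

Lemma measurable_halfline c b : measurable (halfline c b).
Proof. by case: b; exact: measurable_itv. Qed.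

Lemma size_indicators c N w : size (indicators c N w) = N.
Proof. by rewrite size_map size_iota. Qed.

Lemma indicatorsS c N w : indicators c N.+1 w = indicators c N w ++ [:: X N w <= c].
Proof. by rewrite /indicators -addn1 iotaD map_cat. Qed.

Lemma big_indicators (f : bool -> R) c k w :
  \sum_(x <- indicators c k w) f x = \sum_(i < k) f (X i w <= c).
Proof.
by rewrite big_map -(big_mkord xpredT (fun i => f (X i w <= c))) /index_iota subn0.
Qed.

Lemma indicators_eqE c N b : size b = N ->
  [set w | indicators c N w = b] =
  \big[setI/setT]_(i < N) (X i @^-1` halfline c (nth false b i)).
Proof.
move=> sb; rewrite -(bigcap_mkord N (fun i => X i @^-1` halfline c (nth false b i))).
apply/seteqP; split => w /=.
- move=> <- i /= iN; rewrite (nth_map 0) ?size_iota // nth_iota //= add0n.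
  by rewrite /halfline; case: leP => /= h; rewrite in_itv /= ?andbT.
- move=> hw; apply: (@eq_from_nth _ false); rewrite ?size_map ?size_iota //.
  move=> i iN; rewrite (nth_map 0) ?size_iota // nth_iota //= add0n.
  by have := hw i iN; rewrite /halfline; case: nth; rewrite /= in_itv /= ?andbT; case: leP.
Qed.

Lemma measurable_indicators_eq c N b : measurable [set w | indicators c N w = b].
Proof.
have [sb|sb] := eqVneq (size b) N.
  rewrite indicators_eqE //; apply: bigsetI_measurable => i _.
  exact: (measurable_funPTI (X i) (measurable_halfline _ _)).
rewrite (_ : [set _ | _] = set0) //; apply/seteqP; split => w //= bw.
by move: sb; rewrite -bw size_indicators eqxx.
Qed.

Lemma indicators_in_setU c N b (s : seq (seq bool)) :
  [set w | indicators c N w \in b :: s] =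
  [set w | indicators c N w = b] `|` [set w | indicators c N w \in s].
Proof.
apply/seteqP; split => w /=; rewrite inE; first by move=> /orP[/eqP|]; [left|right].
by move=> [->|->]; rewrite ?eqxx ?orbT.
Qed.

Lemma measurable_indicators_in c N (s : seq (seq bool)) :
  measurable [set w | indicators c N w \in s].
Proof.
elim: s => [|b s IH]; last first.
  by rewrite indicators_in_setU; exact: measurableU (measurable_indicators_eq _ _ _) IH.
by rewrite (_ : [set _ | _] = set0) //; apply/seteqP; split => w.
Qed.

Lemma indicators_predE c N (Q : pred (seq bool)) :
  [set w | Q (indicators c N w)] = [set w | indicators c N w \in seq.filter Q (bitseqs N)].
Proof.
apply/seteqP; split => w /=; rewrite mem_filter; last by case/andP.
by move=> ->; rewrite -{2}(size_indicators c N w) mem_bitseqs.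
Qed.

Lemma measurable_indicators_pred c N (Q : pred (seq bool)) :
  measurable [set w | Q (indicators c N w)].
Proof. by rewrite indicators_predE; exact: measurable_indicators_in. Qed.

Lemma P_indicators_in c N (s : seq (seq bool)) : uniq s ->
  P [set w | indicators c N w \in s] = (\sum_(b <- s) P [set w | indicators c N w = b])%E.
Proof.
elim: s => [_|b s IH /= /andP[bs us]].
  by rewrite big_nil (_ : [set _ | _] = set0) ?measure0 //; apply/seteqP; split => w.
rewrite indicators_in_setU measureU.
- by rewrite big_cons; congr (_ + _); exact: IH us.
- exact: measurable_indicators_eq.
- exact: measurable_indicators_in.
- by apply/seteqP; split => w //= [-> sb]; move: bs; rewrite sb.
Qed.

Hypothesis iidX : iid X.

Lemma P_halfline c b i :
  P (X i @^-1` halfline c b) = (if b then distfun (X 0) c else 1 - distfun (X 0) c)%:E.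
Proof.
have Fc : P (X i @^-1` `]-oo, c]) = (distfun (X 0) c)%:E.
  have := iidX.2 i _ (measurable_itv `]-oo, c]).
  rewrite /distribution /pushforward /= => ->.
  by rewrite /distfun fineK ?fin_num_measure //; exact: measurable_funPTI.
case: b => //=; rewrite -setCitvl preimage_setC probability_setC ?Fc //.
exact: (measurable_funPTI (X i) (measurable_itv _)).
Qed.

Lemma P_indicators_eq c b :
  P [set w | indicators c (size b) w = b] = (bern_weight (distfun (X 0) c) b)%:E.
Proof.
rewrite indicators_eqE // (iidX.1 _ (fun i => halfline c (nth false b i))); last first.
  by move=> i; exact: measurable_halfline.
under eq_bigr do rewrite P_halfline.
rewrite prodEFin /bern_weight (big_nth false) big_mkord.
by congr (_%:E); apply: eq_bigr.
Qed.

Lemma P_indicators_pred c N (Q : pred (seq bool)) :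
  P [set w | Q (indicators c N w)] =
  (\sum_(b <- bitseqs N) bern_weight (distfun (X 0) c) b * (Q b)%:R)%:E.
Proof.
rewrite indicators_predE P_indicators_in ?filter_uniq ?uniq_bitseqs // big_filter.
rewrite -sumEFin big_mkcond /=; apply: eq_big_seq => b bN.
by case: (Q b); rewrite ?mulr0 // mulr1 -(size_bitseqs bN) P_indicators_eq.
Qed.

End Sample.

Section EmpiricalQuantile.
Context {d : measure_display} {T : measurableType d} {R : realType}
  (P : probability T R) (X : nat -> {RV P >-> R}).

Definition empirical_count (c : R) (k : nat) (w : T) : R :=
  \sum_(i < k) (X i w <= c)%R%:R.

Lemma empirical_dfE k w t :
  empirical_df X k w t = (\sum_(x <- indicators X t k w) x%:R) / k%:R.
Proof. by rewrite big_indicators. Qed.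

Lemma measurable_empirical_df (Q : pred R) k t :
  measurable [set w | Q (empirical_df X k w t)].
Proof.
under eq_set do rewrite empirical_dfE.
exact: (measurable_indicators_pred X t k (fun b => Q ((\sum_(x <- b) x%:R) / k%:R))).
Qed.

Lemma empirical_df_le k w : {homo empirical_df X k w : t t' / t <= t'}.
Proof.
move=> t t' tt'; rewrite ler_wpM2r ?invr_ge0 ?ler0n //.
apply: ler_sum => i _; case: (leP (X i w) t) => h; last by rewrite ler0n.
by rewrite (le_trans h tt').
Qed.

Lemma abs_sample_le_sum k w (i : 'I_k) : `|X i w| <= \sum_(j < k) `|X j w|.
Proof. by rewrite (bigD1 i) //= lerDl sumr_ge0. Qed.

Lemma empirical_df_ge_neq0 k w alpha : (0 < k)%N -> alpha <= 1 ->
  [set t | alpha <= empirical_df X k w t] !=set0.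
Proof.
move=> k0 a1; exists (\sum_(j < k) `|X j w|) => /=.
rewrite /empirical_df (eq_bigr (fun _ => 1)); last first.
  by move=> i _; rewrite (le_trans (ler_norm _) (abs_sample_le_sum w i)).
by rewrite sumr_const card_ord -[_ *+ _]/(k%:R) divff // pnatr_eq0 -lt0n.
Qed.

Lemma has_lbound_empirical_df_ge k w alpha : 0 < alpha ->
  has_lbound [set t | alpha <= empirical_df X k w t].
Proof.
move=> a0; exists (- \sum_(j < k) `|X j w|) => t /=; apply: contraTT.
rewrite -!ltNge => tM; rewrite /empirical_df big1 ?mul0r // => i _.
have tX : t < X i w.
  apply: lt_le_trans tM _.
  by rewrite lerNl (le_trans _ (abs_sample_le_sum w i)) // -normrN ler_norm.
by rewrite leNgt tX.
Qed.

Lemma empirical_quantile_le k w alpha t : 0 < alpha ->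
  alpha <= empirical_df X k w t -> empirical_quantile X k alpha w <= t.
Proof. by move=> a0; apply: ge_inf; exact: has_lbound_empirical_df_ge. Qed.

Lemma empirical_df_ge_of_quantile_lt k w alpha t : (0 < k)%N -> alpha <= 1 ->
  empirical_quantile X k alpha w < t -> alpha <= empirical_df X k w t.
Proof.
move=> k0 a1 /(inf_lt (empirical_df_ge_neq0 w k0 a1)) [s /= alpha_s st].
exact: le_trans alpha_s (empirical_df_le _ _ (ltW st)).
Qed.

Lemma measurable_empirical_quantile_gt k alpha c : (0 < k)%N -> 0 < alpha <= 1 ->
  measurable [set w | c < empirical_quantile X k alpha w].
Proof.
move=> k0 /andP[a0 a1].
rewrite (_ : [set _ | _] =
    \bigcup_m [set w | empirical_df X k w (c + m.+1%:R^-1) < alpha]).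
  by apply: bigcupT_measurable => m; exact: (measurable_empirical_df (fun v => v < alpha)).
apply/seteqP; split => w /=.
- move=> /ltr_add_invr[m cm]; exists m => //=; rewrite ltNge; apply/negP.
  by move=> /(empirical_quantile_le a0); rewrite leNgt cm.
- move=> [m _ /=]; apply: contraTT; rewrite -!leNgt => Qc.
  apply: empirical_df_ge_of_quantile_lt => //; apply: le_lt_trans Qc _.
  by rewrite ltrDl invr_gt0 ltr0n.
Qed.

Lemma measurable_empirical_quantile_lt k alpha c : (0 < k)%N -> 0 < alpha <= 1 ->
  measurable [set w | empirical_quantile X k alpha w < c].
Proof.
move=> k0 /andP[a0 a1].
rewrite (_ : [set _ | _] =
    \bigcup_m [set w | alpha <= empirical_df X k w (c - m.+1%:R^-1)]).
  by apply: bigcupT_measurable => m; exact: (measurable_empirical_df (fun v => alpha <= v)).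
apply/seteqP; split => w /=.
- move=> /ltr_add_invr[m Qm]; exists m => //=.
  by apply: empirical_df_ge_of_quantile_lt => //; rewrite ltrBrDr.
- move=> [m _ /= /(empirical_quantile_le a0) Qc]; apply: le_lt_trans Qc _.
  by rewrite ltrBlDr ltrDl invr_gt0 ltr0n.
Qed.

(* [sg = 1] or [sg = -1] selects the direction of the deviation. *)
Definition count_deviation (c sg del : R) (n : nat) : set T :=
  [set w | exists2 k, (n <= k)%N &
    k%:R * del <= sg * (k%:R * distfun (X 0) c - empirical_count c k w)].

Lemma quantile_gt_count_deviation alpha c del n k w :
  0 < alpha -> (n <= k)%N -> (0 < k)%N -> del <= distfun (X 0) c - alpha ->
  c < empirical_quantile X k alpha w -> count_deviation c 1 del n w.
Proof.
move=> a0 nk k0 del_c cQ; exists k => //; rewrite mul1r.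
have : empirical_df X k w c < alpha.
  by rewrite ltNge; apply: contraTN cQ => /(empirical_quantile_le a0); rewrite -leNgt.
rewrite /empirical_df ltr_pdivrMr ?ltr0n // -/(empirical_count c k w).
have : 0 <= k%:R :> R := ler0n _ k; nra.
Qed.

Lemma quantile_lt_count_deviation alpha c del n k w :
  alpha <= 1 -> (n <= k)%N -> (0 < k)%N -> del <= alpha - distfun (X 0) c ->
  empirical_quantile X k alpha w < c -> count_deviation c (-1) del n w.
Proof.
move=> a1 nk k0 del_c /(empirical_df_ge_of_quantile_lt k0 a1) alpha_df.
exists k => //; rewrite mulN1r.
move: alpha_df; rewrite /empirical_df ler_pdivlMr ?ltr0n // -/(empirical_count c k w).
have : 0 <= k%:R :> R := ler0n _ k; nra.
Qed.

Lemma sup_quantile_deviationE alpha qa x n :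
  [set w | (x%:E < ereal_sup [set (`|empirical_quantile X k alpha w - qa|)%:E
                              | k in [set k | (n <= k)%N]])%E] =
  \bigcup_(k in [set k | (n <= k)%N])
     ([set w | qa + x < empirical_quantile X k alpha w] `|`
      [set w | empirical_quantile X k alpha w < qa - x]).
Proof.
apply/seteqP; split => w /=.
- move=> /ereal_sup_gt[_ [k /= nk <-]]; rewrite lte_fin ltr_normr => /orP dev.
  by exists k => //; case: dev => ?; [left|right]; rewrite /=; lra.
- move=> [k /= nk hilo]; apply: lt_le_trans (ereal_sup_ubound _); last by exists k.
  by rewrite lte_fin ltr_normr; apply/orP; case: hilo => /= ?; [left|right]; lra.
Qed.

End EmpiricalQuantile.

Section QuantileConcentration.
Context {d : measure_display} {T : measurableType d} {R : realType}
  (P : probability T R) (X : nat -> {RV P >-> R}).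
Hypothesis iidX : iid X.

Lemma measurable_count_deviation c sg del n :
  measurable (count_deviation X c sg del n).
Proof.
pose dev k (b : seq bool) := (n <= k)%N &&
  (k%:R * del <= sg * (k%:R * distfun (X 0) c - \sum_(x <- b) x%:R)).
rewrite (_ : count_deviation X _ _ _ _ = \bigcup_k [set w | dev k (indicators X c k w)]).
  by apply: bigcupT_measurable => k; exact: measurable_indicators_pred.
apply/seteqP; split => w /= [k].
- by move=> nk dev_k; exists k => //; rewrite /= /dev big_indicators nk.
- by move=> _ /=; rewrite /dev big_indicators => /andP[nk dev_k]; exists k.
Qed.

Lemma maximal_hoeffding c sg del n : sg * sg = 1 -> 0 <= del ->
  (P (count_deviation X c sg del n) <= (expR (- (2 * n%:R * del ^+ 2)))%:E)%E.
Proof.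
move=> sg2 del0; set p := distfun (X 0) c.
(* [4 del] is the Chernoff parameter minimising [exp (k lam^2 / 8 - lam k del)]. *)
pose lam := 4 * sg * del.
pose phi (x : bool) := lam * (p - x%:R) - 8^-1 * (lam * lam).
pose L := 2 * n%:R * del ^+ 2.
pose H := \bigcup_N [set w | reaches phi L 0 (indicators X c N w)].
have mH : measurable H.
  by apply: bigcupT_measurable => N; exact: measurable_indicators_pred.
have devH : count_deviation X c sg del n `<=` H.
  move=> w [k nk dev_k]; exists k => //=; apply: reaches_sum.
  rewrite add0r big_indicators /phi big_split /= -mulr_sumr big_split /= sumrN.
  rewrite !sumr_const card_ord -/(empirical_count X c k w).
  (* the sum is [4 del D - 2 k del^2 >= 2 k del^2 >= L], where [D >= k del] *)
  have nk' : n%:R <= k%:R :> R by rewrite ler_nat.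
  set D := sg * (k%:R * p - empirical_count X c k w) in dev_k.
  have -> : lam * (p *+ k - empirical_count X c k w) = 4 * del * D.
    by rewrite /D /lam -mulr_natl; ring.
  have -> : lam * lam = 16 * del ^+ 2 * (sg * sg) by rewrite /lam; ring.
  rewrite sg2 mulr1 /L; nra.
apply: le_trans (le_measure _ _ _ devH) _; rewrite ?inE //.
  exact: measurable_count_deviation.
apply: nondecreasing_bigcup_measure_le => [N|N w|N].
- exact: measurable_indicators_pred.
- by move=> reachN; rewrite /mkset; cbv beta; rewrite indicatorsS; exact: reaches_cat.
rewrite /= P_indicators_pred // lee_fin (_ : - _ = 0 - L); last by rewrite sub0r.
apply: ville_bitseqs; first exact: distfun01.
have := hoeffding_lemma_bernoulli (distfun01 (X 0) c) lam.
rewrite /phi /= subr0 !expRD !expRN -/p.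
rewrite [p * (_ / _)]mulrA [(1 - p) * (_ / _)]mulrA -mulrDl.
by rewrite ler_pdivrMr ?expR_gt0 // mul1r.
Qed.

Lemma empirical_quantile_deviation_bound alpha qa x del n :
  0 < alpha <= 1 -> (0 < n)%N -> 0 <= del ->
  del <= distfun (X 0) (qa + x) - alpha -> del <= alpha - distfun (X 0) (qa - x) ->
  (P [set w | (x%:E < ereal_sup [set (`|empirical_quantile X k alpha w - qa|)%:E
                                  | k in [set k | (n <= k)%N]])%E]
   <= (2 * expR (- (2 * n%:R * del ^+ 2)))%:E)%E.
Proof.
move=> a01 n0 del0 dev_hi dev_lo; have [a0 a1] := andP a01.
rewrite sup_quantile_deviationE.
have k0 k : (n <= k)%N -> (0 < k)%N := leq_trans n0.
have mdev c sg := measurable_count_deviation c sg del n.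
apply: (@le_trans _ _ (P (count_deviation X (qa + x) 1 del n `|`
                          count_deviation X (qa - x) (-1) del n))).
  apply: le_measure; rewrite ?inE.
  - apply: bigcup_measurable => k /k0 k_gt0; apply: measurableU.
    + exact: measurable_empirical_quantile_gt k_gt0 a01.
    + exact: measurable_empirical_quantile_lt k_gt0 a01.
  - exact: measurableU.
  - move=> w [k nk [Qk|Qk]]; [left|right].
    + exact: quantile_gt_count_deviation a0 nk (k0 _ nk) dev_hi Qk.
    + exact: quantile_lt_count_deviation a1 nk (k0 _ nk) dev_lo Qk.
apply: le_trans (measureU2 _ (mdev _ _) (mdev _ _)) _.
rewrite mulr_natl mulr2n EFinD leeD // maximal_hoeffding //.
- by rewrite mulr1.
- by rewrite mulrNN mulr1.
Qed.

End QuantileConcentration.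

Section UniqueQuantile.
Variables (R : realType) (F : R -> R).
Hypothesis ndF : {homo F : x y / x <= y}.

Lemma is_cvg_at_left_nondecreasing q : cvg (F x @[x --> q^'-]).
Proof.
apply: nondecreasing_at_left_is_cvgr; first by apply: nearW => x y z _ _; exact: ndF.
apply: nearW => x; exists (F q) => _ [y /= + <-].
by rewrite in_itv /= => /andP[_ /ltW]; exact: ndF.
Qed.

Lemma left_lim_le q : left_lim F q <= F q.
Proof.
apply: limr_le; first exact: is_cvg_at_left_nondecreasing.
by near=> x; apply: ndF; near: x; exact: nbhs_left_le.
Unshelve. all: by end_near.
Qed.

Lemma le_left_lim y q : y < q -> F y <= left_lim F q.
Proof.
move=> yq; apply: limr_ge; first exact: is_cvg_at_left_nondecreasing.
by near=> x; apply: ndF; near: x; exact: nbhs_left_ge.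
Unshelve. all: by end_near.
Qed.

Lemma unique_quantile_gap alpha qa x :
  (forall q, is_quantile F alpha q <-> q = qa) -> 0 < x ->
  0 < F (qa + x) - alpha /\ 0 < alpha - F (qa - x).
Proof.
move=> uq x0; have /andP[left_qa qa_right] := (uq qa).2 erefl.
split; rewrite subr_gt0 ltNge; apply/negP => F_alpha.
- (* otherwise qa + x would also be an alpha-quantile *)
  have /uq/eqP : is_quantile F alpha (qa + x).
    apply/andP; split; first exact: le_trans (left_lim_le _) F_alpha.
    by apply: le_trans qa_right _; apply: ndF; rewrite lerDl ltW.
  by rewrite -subr_eq0 addrC addKr gt_eqF.
- (* otherwise qa - x / 2 would also be an alpha-quantile *)
  have /uq/eqP : is_quantile F alpha (qa - x / 2).
    apply/andP; split.
      apply: le_trans (left_lim_le _) _; apply: le_trans (le_left_lim _) left_qa.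
      by rewrite ltrBlDr ltrDl divr_gt0.
    apply: le_trans F_alpha _; apply: ndF.
    by rewrite lerB // ler_pdivrMr // ler_pMr // ler1n.
  by rewrite -subr_eq0 addrC addKr oppr_eq0 gt_eqF ?divr_gt0.
Qed.

End UniqueQuantile.

Unset Implicit Arguments. Set Strict Implicit.

Theorem mainTheorem9 (d : measure_display) (T : measurableType d) (R : realType)
  (P : probability T R) (X : nat -> {RV P >-> R}) (alpha qa : R) :
  0 < alpha < 1 ->
  iid X ->
  (forall q, is_quantile (distfun (X 0)) alpha q <-> q = qa) ->
  let F := distfun (X 0) in
  let dd := fun x : R => Num.min (F (qa + x) - alpha) (alpha - F (qa - x)) in
  (forall x : R, 0 < x -> 0 < dd x) /\
  (forall (n : nat) (x : R), (0 < n)%N -> 0 < x ->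
    (P [set w | (x%:E < ereal_sup
          [set (`|empirical_quantile X k alpha w - qa|)%:E | k in [set k | (n <= k)%N]])%E]
     <= (2 * expR (- 2 * n%:R * dd x ^+ 2))%:E)%E).
Proof.
move=> /andP[a0 a1] iidX uq F dd.
have dd_gt0 x : 0 < x -> 0 < dd x.
  move=> x0; have [hi lo] := unique_quantile_gap (distfun_nondecreasing (X 0)) uq x0.
  by rewrite lt_min hi lo.
split => // n x n0 x0.
rewrite !mulNr; apply: empirical_quantile_deviation_bound => //.
- by rewrite a0 ltW.
- exact: ltW (dd_gt0 x x0).
- by rewrite ge_min lexx.
- by rewrite ge_min lexx orbT.
Qed.
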